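(* Let $\Bbbk$ be a field, $X$ the generic symmetric $n\times n$ matrix, and for $i=1,\dots,n$ let $d_i$ be the determinant of the $i\times i$ submatrix of $X$ in the bottom-left corner (rows $n-i+1,\dots,n$ and columns $1,\dots,i$). Put $\mathfrak{D}=d_1d_2\cdots d_n\in\Bbbk[X]$. With respect to the lexicographic monomial order on $\Bbbk[X]$ induced by the variable order $x_{11}>x_{12}>\cdots>x_{1n}>x_{22}>x_{23}>\cdots>x_{2n}>\cdots>x_{n-1,n}>x_{nn}$ (i.e. $x_{ij}>x_{kl}$ iff $(i,j)$ precedes $(k,l)$ lexicographically, $i\le j$, $k\le l$), the leading term of $\mathfrak{D}$ is $\prod_{1\le i\le j\le n}x_{ij}$. In particular, if $\operatorname{char}\Bbbk=p>0$, then $\mathfrak{D}^{p-1}\notin\mathfrak{m}_S^{[p]}$, where $\mathfrak{m}_S=(x_{ij}\mid 1\le i\le j\le n)$.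
   Context: $X=(x_{ij})$ is the symmetric $n\times n$ matrix whose entries are independent indeterminates subject only to $x_{ij}=x_{ji}$; $S=\Bbbk[X]=\Bbbk[x_{ij}\mid 1\le i\le j\le n]$. For an ideal $J$ in characteristic $p$, $J^{[p]}$ denotes the ideal generated by $p$-th powers of elements of $J$. *)

From HB Require Import structures.
From mathcomp Require Import all_boot all_order all_algebra.
From mathcomp Require Import zify.
From mathcomp.multinomials Require Import mpoly.
Set Implicit Arguments. Unset Strict Implicit. Unset Printing Implicit Defensive.
Import Order.TTheory GRing.Theory.
Local Open Scope ring_scope.

(* Index set of the variables x_ij, 1 <= i <= j <= n (0-based here). *)
Definition sidx (n : nat) := {p : 'I_n * 'I_n | (p.1 <= p.2)%N}.

Definition nvars (n : nat) : nat := #|{: sidx n}|.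

(* The (abstract) polynomial ring S = k[x_ij | i <= j]: the variables are
   numbered bijectively by [enum_rank]; the monomial order below is defined
   directly in terms of the pairs (i,j), independently of this numbering. *)
Definition varS (K : fieldType) (n : nat) (t : sidx n) : {mpoly K[nvars n]} :=
  'X_(enum_rank t).

Lemma sym_pair_aux (i j : nat) : ~~ (i <= j)%N -> (j <= i)%N.
Proof. by move=> h; rewrite ltnW // ltnNge. Qed.

Definition sym_pair (n : nat) (i j : 'I_n) : sidx n :=
  match boolP (i <= j)%N with
  | AltTrue h => exist (fun p : 'I_n * 'I_n => (p.1 <= p.2)%N) (i, j) h
  | AltFalse h => exist (fun p : 'I_n * 'I_n => (p.1 <= p.2)%N) (j, i) (sym_pair_aux h)
  end.

Definition genSym (K : fieldType) (n : nat) : 'M[{mpoly K[nvars n]}]_n :=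
  \matrix_(i, j) varS K (sym_pair i j).

Lemma corner_row_aux (n : nat) (k : 'I_n) (r : 'I_k.+1) : (n.-1 - k + r < n)%N.
Proof. case: k r => k hk [r /= hr]; rewrite -subn1; move: hk hr; lia. Qed.

(* d_{k+1} : the determinant of the (k+1) x (k+1) bottom-left submatrix of X,
   rows n-k..n and columns 1..k+1 (1-based), for k = 0..n-1. *)
Definition corner_minor (K : fieldType) (n : nat) (k : 'I_n) : {mpoly K[nvars n]} :=
  \det (\matrix_(r < k.+1, c < k.+1)
          genSym K n (Ordinal (corner_row_aux r)) (widen_ord (ltn_ord k) c)).

Definition frakD (K : fieldType) (n : nat) : {mpoly K[nvars n]} :=
  \prod_(k < n) corner_minor K k.

Local Close Scope ring_scope.
Definition pair_prec (n : nat) (s t : sidx n) : bool :=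
  ((val s).1 < (val t).1)%N ||
  (((val s).1 == (val t).1) && ((val s).2 < (val t).2)%N).

Definition expo (n : nat) (m : 'X_{1..nvars n}) (t : sidx n) : nat := m (enum_rank t).

(* Lex monomial order induced by x_11 > x_12 > ... > x_1n > x_22 > ... > x_nn:
   m1 < m2 iff at the first variable (largest) where they differ,
   m1 has the smaller exponent. *)
Definition lex_lt (n : nat) (m1 m2 : 'X_{1..nvars n}) : Prop :=
  exists t : sidx n,
    (forall s : sidx n, pair_prec s t -> expo m1 s = expo m2 s) /\
    (expo m1 t < expo m2 t)%N.

Local Open Scope ring_scope.
Definition is_lex_leading_term (K : fieldType) (n : nat)
    (p q : {mpoly K[nvars n]}) : Prop :=
  exists m : 'X_{1..nvars n},
    [/\ m \in msupp p,
        (forall m', m' \in msupp p -> m' != m -> lex_lt m' m) &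
        q = p@_m *: 'X_[m]].

Definition in_ideal (R : comRingType) (G : R -> Prop) (f : R) : Prop :=
  exists (k : nat) (a g : 'I_k -> R),
    (forall i, G (g i)) /\ f = \sum_(i < k) a i * g i.

Definition frob_power (R : comRingType) (J : R -> Prop) (p : nat) : R -> Prop :=
  in_ideal (fun g => exists h, J h /\ g = h ^+ p).

Definition max_ideal (K : fieldType) (n : nat) : {mpoly K[nvars n]} -> Prop :=
  in_ideal (fun g => exists t : sidx n, g = varS K t).

Arguments varS K {n} t.
Arguments frakD K n.
Arguments max_ideal : clear implicits.

From HB Require Import structures.
From mathcomp Require Import all_boot all_order all_algebra.
From mathcomp Require Import zify perm.
From mathcomp.multinomials Require Import mpoly.
Import GRing.Theory.

Set Implicit Arguments.
Unset Strict Implicit.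
Unset Printing Implicit Defensive.

(* The lex order is a monomial order, so the leading term of a product is the
   product of the leading terms.  In the Leibniz expansion of the corner minor
   d_k the identity permutation gives the product of the entries x_{i,i+n-k} of
   its main diagonal, and every other permutation loses to it at the first row
   it moves.  These diagonals partition the variables, so the leading term of D
   is the product of all x_ij.  In characteristic p the Frobenius map is
   additive, so every monomial of an element of m^[p] is divisible by some
   x_ij^p, whereas the leading monomial of D^(p-1) has all exponents p - 1. *)

Section LexOrder.
Variable n : nat.
Implicit Types (s t u : sidx n) (a b c : 'X_{1..nvars n}).

Lemma sidx_eqE s t :
  (s == t) = ((val s).1 == (val t).1 :> nat) && ((val s).2 == (val t).2 :> nat).
Proof.
case: s t => [[a b] h] [[c d] h'] /=; apply/eqP/andP => [[-> ->] // | [e1 e2]].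
move: h h'; rewrite (val_inj (eqP e1)) (val_inj (eqP e2)) => h h'.
by rewrite (bool_irrelevance h h').
Qed.

Lemma pair_prec_trans s t u : pair_prec s t -> pair_prec t u -> pair_prec s u.
Proof. rewrite /pair_prec -!val_eqE /=; lia. Qed.

Lemma pair_prec_irr s : ~~ pair_prec s s.
Proof. by rewrite /pair_prec !ltnn eqxx. Qed.

Lemma pair_prec_asym s t : pair_prec s t -> ~~ pair_prec t s.
Proof. rewrite /pair_prec -!val_eqE /=; lia. Qed.

Lemma pair_prec_total s t : s != t -> pair_prec s t || pair_prec t s.
Proof. rewrite sidx_eqE /pair_prec -!val_eqE /=; lia. Qed.

Lemma lex_lt_irr a : ~ lex_lt a a.
Proof. by case=> t [_]; rewrite ltnn. Qed.

Lemma lex_lt_trans a b c : lex_lt a b -> lex_lt b c -> lex_lt a c.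
Proof.
move=> [t1 [h1 l1]] [t2 [h2 l2]].
have [e|ne] := eqVneq t1 t2.
  subst t2; exists t1; by split=> [s hs|]; [rewrite h1 ?h2 | exact: ltn_trans l2].
case/orP: (pair_prec_total ne) => hp.
  exists t1; split=> [s hs|]; last by rewrite -(h2 _ hp).
  by rewrite h1 // h2 //; exact: pair_prec_trans hs hp.
exists t2; split=> [s hs|]; last by rewrite (h1 _ hp).
by rewrite h1 ?h2 //; exact: pair_prec_trans hs hp.
Qed.

Lemma lex_ltD2r a b c : lex_lt a b -> lex_lt (a + c)%MM (b + c)%MM.
Proof.
move=> [t [h l]]; exists t; rewrite /expo !mnmDE ltn_add2r; split=> // s hs.
by rewrite !mnmDE; congr addn; exact: h.
Qed.

Lemma lex_ltD2l a b c : lex_lt a b -> lex_lt (c + a)%MM (c + b)%MM.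
Proof. by rewrite ![(c + _)%MM]addmC; exact: lex_ltD2r. Qed.

End LexOrder.

Section LeadingTerm.
Variables (K : fieldType) (n : nat).
Local Open Scope ring_scope.
Local Notation S := {mpoly K[nvars n]}.
Implicit Types (p q : S) (a b m : 'X_{1..nvars n}) (c d : K).

Definition lex_supp_le p a := forall m, m \in msupp p -> m = a \/ lex_lt m a.

Definition lex_supp_lt p a := forall m, m \in msupp p -> lex_lt m a.

Definition lex_lead p a c :=
  [/\ p@_a = c, c != 0 & forall m, m \in msupp p -> m != a -> lex_lt m a].

Lemma lex_supp_ltW p a : lex_supp_lt p a -> lex_supp_le p a.
Proof. by move=> h m /h; right. Qed.

Lemma lex_lead_supp_le p a c : lex_lead p a c -> lex_supp_le p a.
Proof. by case=> _ _ h m hm; have [|/(h _ hm)] := eqVneq m a; [left | right]. Qed.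

Lemma lex_supp_le_monomial c a : lex_supp_le (c *: 'X_[a]) a.
Proof.
move=> m; rewrite mcoeff_msupp mcoeffZ mcoeffX.
by have [->|_] := eqVneq a m; [left | rewrite mulr0 eqxx].
Qed.

Lemma lex_supp_lt_coef p a : lex_supp_lt p a -> p@_a = 0.
Proof.
by move=> h; apply/eqP; apply: contraT; rewrite -mcoeff_msupp => /h /lex_lt_irr.
Qed.

Lemma lex_supp_leM p q a b :
  lex_supp_le p a -> lex_supp_le q b -> lex_supp_le (p * q) (a + b)%MM.
Proof.
move=> hp hq _ /msuppM_le/allpairsP [[m1 m2] /= [/hp h1 /hq h2 ->]].
case: h1 h2 => [->|l1] [->|l2]; [by left | right..].
- exact: lex_ltD2l.
- exact: lex_ltD2r.
- exact: lex_lt_trans (lex_ltD2r _ l1) (lex_ltD2l _ l2).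
Qed.

Lemma lex_supp_ltMl p q a b :
  lex_supp_lt p a -> lex_supp_le q b -> lex_supp_lt (p * q) (a + b)%MM.
Proof.
move=> hp hq _ /msuppM_le/allpairsP [[m1 m2] /= [/hp l1 /hq h2 ->]].
case: h2 => [->|l2]; first exact: lex_ltD2r.
exact: lex_lt_trans (lex_ltD2r _ l1) (lex_ltD2l _ l2).
Qed.

Lemma lex_supp_ltMr p q a b :
  lex_supp_le p a -> lex_supp_lt q b -> lex_supp_lt (p * q) (a + b)%MM.
Proof. by move=> hp hq; rewrite mulrC addmC; exact: lex_supp_ltMl. Qed.

Lemma lex_lead_decomp p a c :
  lex_lead p a c -> exists2 r, p = c *: 'X_[a] + r & lex_supp_lt r a.
Proof.
case=> e _ h; exists (p - c *: 'X_[a]); first by rewrite addrC subrK.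
move=> m; rewrite mcoeff_msupp mcoeffB mcoeffZ mcoeffX.
have [<-|ne] := eqVneq a m; first by rewrite e mulr1 subrr eqxx.
by rewrite mulr0 subr0 -mcoeff_msupp => /h; apply; rewrite eq_sym.
Qed.

Lemma lex_leadM p q a b c d :
  lex_lead p a c -> lex_lead q b d -> lex_lead (p * q) (a + b)%MM (c * d).
Proof.
move=> hp hq; split.
- have [p1 -> lt_p1] := lex_lead_decomp hp.
  have [q1 -> lt_q1] := lex_lead_decomp hq.
  rewrite mulrDl !mulrDr !mcoeffD.
  have lead_p := lex_supp_le_monomial (c := c) (a := a).
  have lead_q := lex_supp_le_monomial (c := d) (a := b).
  rewrite (lex_supp_lt_coef (lex_supp_ltMr lead_p lt_q1)).
  rewrite (lex_supp_lt_coef (lex_supp_ltMl lt_p1 lead_q)).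
  rewrite (lex_supp_lt_coef (lex_supp_ltMl lt_p1 (lex_supp_ltW lt_q1))) !addr0.
  by rewrite -scalerAl -scalerAr scalerA -mpolyXD mcoeffZ mcoeffX eqxx mulr1.
- by case: hp hq => _ nz_c _ [_ nz_d _]; rewrite mulf_neq0.
- move=> m /(lex_supp_leM (lex_lead_supp_le hp) (lex_lead_supp_le hq)).
  by case=> [->|//]; rewrite eqxx.
Qed.

Lemma lex_lead1 : lex_lead 1 0%MM 1.
Proof.
split; [by rewrite mcoeff1 eqxx | exact: oner_neq0 | move=> m].
by rewrite mcoeff_msupp mcoeff1; have [->|_] := eqVneq m 0%MM; rewrite ?eqxx.
Qed.

Lemma lex_lead_prod (I : Type) (r : seq I) (F : I -> S) A C :
  (forall i, lex_lead (F i) (A i) (C i)) ->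
  lex_lead (\prod_(i <- r) F i) (\big[+%MM/0%MM]_(i <- r) A i) (\prod_(i <- r) C i).
Proof.
move=> h; elim: r => [|x r ih]; first by rewrite !big_nil; exact: lex_lead1.
by rewrite !big_cons; exact: lex_leadM.
Qed.

Lemma lex_leadX p a c k : lex_lead p a c -> lex_lead (p ^+ k) (a *+ k)%MM (c ^+ k).
Proof.
move=> h; elim: k => [|k ih]; first by rewrite !expr0 mulm0n; exact: lex_lead1.
by rewrite !exprS mulmS; exact: lex_leadM.
Qed.

Lemma lex_lead_sum (I : finType) (F : I -> K) (M : I -> 'X_{1..nvars n}) i0 :
  F i0 != 0 -> (forall i, i != i0 -> lex_lt (M i) (M i0)) ->
  lex_lead (\sum_i F i *: 'X_[M i]) (M i0) (F i0).
Proof.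
move=> nz hlt.
have coefE m : (\sum_i F i *: 'X_[M i] : S)@_m = \sum_i F i * (M i == m)%:R.
  by rewrite raddf_sum /=; apply: eq_bigr => i _; rewrite mcoeffZ mcoeffX.
split=> // [|m].
  rewrite coefE (bigD1 i0) //= eqxx mulr1 big1 ?addr0 // => i /hlt.
  by case: eqP => [-> /lex_lt_irr | _ _]; rewrite ?mulr0.
rewrite mcoeff_msupp coefE => hm ne.
have [i /eqP eMi] : exists i, M i == m.
  apply/existsP; apply: contraNT hm; rewrite negb_exists => /forallP hM.
  by apply/eqP/big1 => i _; rewrite (negbTE (hM i)) mulr0.
by rewrite -eMi; apply: hlt; apply: contraNneq ne => <-; rewrite eMi.
Qed.

Lemma lex_lead_msupp p a c : lex_lead p a c -> a \in msupp p.
Proof. by case=> e nz _; rewrite mcoeff_msupp e. Qed.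

Lemma lex_lead_leading_term p a c :
  lex_lead p a c -> is_lex_leading_term p (c *: 'X_[a]).
Proof.
move=> h; have [e _ hlt] := h.
by exists a; split; [exact: lex_lead_msupp h | exact: hlt | rewrite e].
Qed.

End LeadingTerm.

Section FrobeniusPower.
Variables (K : fieldType) (N : nat).
Local Open Scope ring_scope.
Implicit Types f g : {mpoly K[N]}.

Definition pow_divisible (e : nat) f :=
  forall m, m \in msupp f -> exists i, (e <= m i)%N.

Lemma pow_divisible0 e : pow_divisible e 0.
Proof. by move=> m; rewrite msupp0. Qed.

Lemma pow_divisibleD e f g :
  pow_divisible e f -> pow_divisible e g -> pow_divisible e (f + g).
Proof. by move=> hf hg m /msuppD_le; rewrite mem_cat => /orP [/hf | /hg]. Qed.

Lemma pow_divisible_sum e (I : Type) (r : seq I) (F : I -> {mpoly K[N]}) :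
  (forall i, pow_divisible e (F i)) -> pow_divisible e (\sum_(i <- r) F i).
Proof.
move=> h; elim: r => [|x r ih]; first by rewrite big_nil; exact: pow_divisible0.
by rewrite big_cons; exact: pow_divisibleD.
Qed.

Lemma pow_divisibleMl e f g : pow_divisible e g -> pow_divisible e (f * g).
Proof.
move=> hg _ /msuppM_le/allpairsP [[m1 m2] /= [_ /hg [i hi] ->]].
by exists i; rewrite mnmDE (leq_trans hi) ?leq_addl.
Qed.

Lemma pow_divisibleXn e i : pow_divisible e ('X_i ^+ e).
Proof.
move=> m; rewrite mpolyXn msuppX mem_seq1 => /eqP ->.
by exists i; rewrite mulmnE mnm1E eqxx mul1n.
Qed.

(* Freshman's dream: [(\sum_j b_j x_j)^p = \sum_j b_j^p x_j^p] in characteristic [p]. *)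
Lemma frob_power_pow_divisible (G : {mpoly K[N]} -> Prop) p f :
  (forall g, G g -> exists i, g = 'X_i) -> p \in [pchar K] ->
  frob_power (in_ideal G) p f -> pow_divisible p f.
Proof.
move=> Gvar pcharK [k [a [g [hg ->]]]].
apply: pow_divisible_sum => i; apply: pow_divisibleMl.
have [h [[k' [b [v [hv ->]]]] ->]] := hg i.
have pchar_mpoly := rmorph_pchar (@mpolyC N K) pcharK.
rewrite -(pFrobenius_autE pchar_mpoly) raddf_sum; apply: pow_divisible_sum => j.
rewrite /= pFrobenius_autE exprMn; apply: pow_divisibleMl.
by have [t ->] := Gvar _ (hv j); exact: pow_divisibleXn.
Qed.

End FrobeniusPower.

Lemma perm_first_moved m (s : 'S_m) : s != 1%g ->
  exists r0 : 'I_m, [/\ (r0 < s r0)%N, forall r : 'I_m, (r < r0)%N -> s r = r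
                     & forall r : 'I_m, (r0 <= r)%N -> (r0 <= s r)%N].
Proof.
move=> s1; have [r1 moved_r1] : exists r1, s r1 != r1.
  apply/existsP; apply: contraNT s1; rewrite negb_exists => /forallP fixed.
  by apply/eqP/permP => r; rewrite perm1; apply/eqP; rewrite -[_ == _]negbK.
case: (arg_minnP (P := fun r => s r != r) val moved_r1) => r0 moved_r0 min_r0.
have fixed (r : 'I_m) : (r < r0)%N -> s r = r.
  by move=> lt_r; apply/eqP; apply: contraTT lt_r => /min_r0; rewrite -leqNgt.
have ge_r0 (r : 'I_m) : (r0 <= r)%N -> (r0 <= s r)%N.
  move=> le_r; rewrite leqNgt; apply/negP => lt_sr.
  have /perm_inj e := fixed _ lt_sr.
  by move: lt_sr; rewrite e ltnNge le_r.
exists r0; split=> //.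
by rewrite ltn_neqAle ge_r0 // andbT eq_sym val_eqE.
Qed.

Section CornerMinors.
Variable n : nat.

Lemma sym_pair_min (i j : 'I_n) : (val (sym_pair i j)).1 = minn i j :> nat.
Proof. by rewrite /sym_pair; destruct (boolP (i <= j)%N) => /=; lia. Qed.

Lemma sym_pair_max (i j : 'I_n) : (val (sym_pair i j)).2 = maxn i j :> nat.
Proof. by rewrite /sym_pair; destruct (boolP (i <= j)%N) => /=; lia. Qed.

Definition corner_var (k : 'I_n) (r c : 'I_k.+1) : sidx n :=
  sym_pair (Ordinal (corner_row_aux r)) (widen_ord (ltn_ord k) c).

Lemma corner_var_min (k : 'I_n) (r c : 'I_k.+1) :
  (val (corner_var r c)).1 = minn (n.-1 - k + r) c :> nat.
Proof. exact: sym_pair_min. Qed.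

Lemma corner_var_max (k : 'I_n) (r c : 'I_k.+1) :
  (val (corner_var r c)).2 = maxn (n.-1 - k + r) c :> nat.
Proof. exact: sym_pair_max. Qed.

Lemma corner_var_diag_prec (k : 'I_n) (r r0 : 'I_k.+1) :
  (r < r0)%N -> pair_prec (corner_var r r) (corner_var r0 r0).
Proof.
rewrite /pair_prec -val_eqE /= !corner_var_min !corner_var_max.
have := ltn_ord k; lia.
Qed.

Lemma corner_var_after (k : 'I_n) (r0 r c : 'I_k.+1) :
  (r0 <= r)%N -> (r0 <= c)%N -> (r0 < r)%N || (r0 < c)%N ->
  pair_prec (corner_var r0 r0) (corner_var r c).
Proof.
rewrite /pair_prec -val_eqE /= !corner_var_min !corner_var_max.
have := ltn_ord k; have := ltn_ord r; have := ltn_ord c; lia.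
Qed.

Lemma corner_var_diagE (k : 'I_n) (r : 'I_k.+1) (t : sidx n) :
  (corner_var r r == t) =
    (k == n.-1 - (val t).2 + (val t).1 :> nat) && (r == (val t).1 :> nat).
Proof.
rewrite sidx_eqE corner_var_min corner_var_max.
have := svalP t; have := ltn_ord (val t).2; have := ltn_ord k; have := ltn_ord r.
lia.
Qed.

End CornerMinors.

Definition perm_mon n (k : 'I_n) (s : 'S_k.+1) : 'X_{1..nvars n} :=
  (\sum_(r < k.+1) U_(enum_rank (corner_var r (s r))))%MM.
Arguments perm_mon {n} k s.

Lemma expo_perm_mon n (k : 'I_n) (s : 'S_k.+1) t :
  expo (perm_mon k s) t = \sum_(r < k.+1) (corner_var r (s r) == t).
Proof.
rewrite /expo mnm_sumE; apply: eq_bigr => r _.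
by rewrite mnm1E (inj_eq enum_rank_inj).
Qed.

Lemma perm_mon_lt n (k : 'I_n) (s : 'S_k.+1) :
  s != 1%g -> lex_lt (perm_mon k s) (perm_mon k 1%g).
Proof.
case/perm_first_moved => r0 [lt_r0 fixed ge_r0]; set t := corner_var r0 r0.
have after_s (r : 'I_k.+1) : (r0 <= r)%N -> pair_prec t (corner_var r (s r)).
  move=> le_r0r; apply: corner_var_after; rewrite ?ge_r0 //.
  by case: ltngtP le_r0r => // /val_inj eq_r; rewrite -eq_r lt_r0.
have after_1 (r : 'I_k.+1) :
    (r0 <= r)%N -> corner_var r r = t \/ pair_prec t (corner_var r r).
  rewrite leq_eqVlt => /orP [/eqP /val_inj <- | lt_r0r]; first by left.
  by right; apply: corner_var_after; rewrite ?lt_r0r // ltnW.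
exists t; split=> [u u_t | ].
  have neq_u v : v = t \/ pair_prec t v -> (v == u) = false.
    case=> [-> | t_v]; apply: contraTF u_t => /eqP <-;
      [exact: pair_prec_irr | exact: pair_prec_asym].
  rewrite !expo_perm_mon; apply: eq_bigr => r _; rewrite perm1.
  have [/fixed -> // | le_r0r] := ltnP r r0.
  by rewrite !neq_u //; [exact: after_1 | right; exact: after_s].
rewrite !expo_perm_mon big1 => [|r _].
  by rewrite (bigD1 r0) //= perm1 eqxx.
apply/eqP; rewrite eqb0; have [lt_rr0 | /after_s t_sr] := ltnP r r0.
  rewrite fixed //; apply: contraTneq (corner_var_diag_prec lt_rr0) => ->.
  exact: pair_prec_irr.
by apply: contraTneq t_sr => ->; exact: pair_prec_irr.
Qed.

Lemma sum_ord_eq m a : (\sum_(r < m) (r == a :> nat))%N = (a < m)%N.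
Proof.
elim: m => [|m ih]; first by rewrite big_ord0.
by rewrite big_ord_recr /= ih ltnS; case: (ltngtP a m).
Qed.

Definition diag_mon n : 'X_{1..nvars n} := (\sum_(k < n) perm_mon k 1%g)%MM.

(* Each x_ij lies on exactly one of the main diagonals of the corner submatrices,
   namely that of size n - (j - i). *)
Lemma diag_monE n (i : 'I_(nvars n)) : diag_mon n i = 1%N.
Proof.
rewrite -[i]enum_valK; move: (enum_val i) => t.
have le_t : ((val t).1 <= (val t).2)%N := valP t.
have lt_t2 := ltn_ord (val t).2.
have lt_k0 : (n.-1 - (val t).2 + (val t).1 < n)%N by lia.
rewrite mnm_sumE.
transitivity (\sum_(k < n) (k == n.-1 - (val t).2 + (val t).1 :> nat))%N.
  apply: eq_bigr => k _; rewrite -/(expo _ t) expo_perm_mon.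
  under eq_bigr => r _ do rewrite perm1 corner_var_diagE.
  have [-> /= | _] := eqVneq (k : nat); last by rewrite big1.
  by rewrite sum_ord_eq ltnS leq_addl.
by rewrite sum_ord_eq lt_k0.
Qed.

Section FrakD.
Variables (K : fieldType) (n : nat).
Local Open Scope ring_scope.

Lemma corner_minorE (k : 'I_n) :
  corner_minor K k = \sum_(s : 'S_k.+1) ((-1) ^+ s : K) *: 'X_[perm_mon k s].
Proof.
rewrite /corner_minor /determinant; apply: eq_bigr => s _.
rewrite -mul_mpolyC rmorph_sign; congr (_ * _).
rewrite /perm_mon (big_morph _ (@mpolyXD _ _) (@mpolyX0 _ _)).
by apply: eq_bigr => r _; rewrite !mxE.
Qed.

Lemma lex_lead_corner_minor (k : 'I_n) :
  lex_lead (corner_minor K k) (perm_mon k 1%g) 1.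
Proof.
have sgn1 : (-1) ^+ (1%g : 'S_k.+1) = 1 :> K by rewrite odd_perm1.
have := lex_lead_sum (K := K) (F := fun s : 'S_k.+1 => (-1) ^+ s)
  (M := perm_mon k) (i0 := 1%g).
rewrite /= sgn1 -corner_minorE; apply; first exact: oner_neq0.
by move=> s /perm_mon_lt.
Qed.

Lemma lex_lead_frakD : lex_lead (frakD K n) (diag_mon n) 1.
Proof.
have := lex_lead_prod (F := @corner_minor K n) (A := fun k => perm_mon k 1%g)
  (C := fun=> 1) (index_enum 'I_n).
by rewrite big1_eq; apply=> k; exact: lex_lead_corner_minor.
Qed.

Lemma prod_varS : \prod_(t : sidx n) varS K t = 'X_[diag_mon n].
Proof.
have -> : diag_mon n = (\sum_(t : sidx n) U_(enum_rank t))%MM.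
  apply/mnmP => i; rewrite diag_monE mnm_sumE (bigD1 (enum_val i)) //= big1.
    by rewrite mnm1E enum_valK eqxx.
  move=> t; rewrite mnm1E.
  by case: (enum_rank t =P i) => // <-; rewrite enum_rankK eqxx.
by rewrite (big_morph (fun m => 'X_[m] : {mpoly K[nvars n]})
  (@mpolyXD _ _) (@mpolyX0 _ _)).
Qed.

End FrakD.

Local Open Scope ring_scope.

Theorem mainTheorem3 (K : fieldType) (n : nat) :
  is_lex_leading_term (frakD K n) (\prod_(t : sidx n) varS K t) /\
  (forall p : nat, p \in [pchar K] ->
     ~ frob_power (max_ideal K n) p (frakD K n ^+ p.-1)).
Proof.
have lead_D := lex_lead_frakD K n.
split.
  rewrite prod_varS -[X in is_lex_leading_term _ X]scale1r.
  exact: lex_lead_leading_term.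
move=> p pcharK /frob_power_pow_divisible D_div.
have varS_var (g : {mpoly K[nvars n]}) :
    (exists t, g = varS K t) -> exists i, g = 'X_i.
  by case=> t ->; exists (enum_rank t).
have [i] := D_div varS_var pcharK _ (lex_lead_msupp (lex_leadX p.-1 lead_D)).
rewrite mulmnE diag_monE mul1n.
by have := prime_gt0 (pcharf_prime pcharK); lia.
Qed.
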